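(* Let $V$ be a Majorana algebra with a set $A$ of Majorana axes generating $V$. Then the group $G = \langle \tau(a) \mid a \in A\rangle$ acts faithfully on $A$.
   Context: Let $V$ be a real vector space with a positive definite symmetric bilinear form $(\,,\,)$ and a bilinear commutative (non-associative) product $\cdot$ such that (M1) $(u, v\cdot w) = (u\cdot v, w)$ and (M2) $(u\cdot u, v\cdot v)\ge (u\cdot v, u\cdot v)$ for all $u,v,w \in V$. For $a \in V$ write $V_\mu^{(a)} = \{v : a\cdot v = \mu v\}$. A Majorana axis is a nonzero $a\in V$ with: (M3) $(a,a)=1$, $a\cdot a=a$; (M4) $V = V_1^{(a)}\oplus V_0^{(a)}\oplus V_{1/4}^{(a)} \oplus V_{1/32}^{(a)}$; (M5) $V_1^{(a)}=\mathbb{R}a$; (M6) the linear map $\tau(a)$ acting as $+1$ on $V_1^{(a)}\oplus V_0^{(a)}\oplus V_{1/4}^{(a)}$ and $-1$ on $V_{1/32}^{(a)}$ is an algebra automorphism; (M7) on $V_+^{(a)}=V_1^{(a)}\oplus V_0^{(a)}\oplus V_{1/4}^{(a)}$ the map acting as $+1$ on $V_1^{(a)}\oplus V_0^{(a)}$ and $-1$ on $V_{1/4}^{(a)}$ preserves the product restricted to $V_+^{(a)}$. A Majorana algebra is such a $V$ generated as an algebra by a set $A$ of Majorana axes. Standing convention: the set $A$ is assumed closed under the action of $G=\langle \tau(a)\mid a\in A\rangle$ (acting on the right). *)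

From HB Require Import structures.
From mathcomp Require Import all_boot all_order all_algebra.
From mathcomp Require Import reals.
Set Implicit Arguments. Unset Strict Implicit. Unset Printing Implicit Defensive.
Import Order.TTheory GRing.Theory Num.Theory.
Local Open Scope ring_scope.

Section Majorana.
Variables (R : realType) (V : lmodType R).
Variables (form : V -> V -> R) (mul : V -> V -> V).

Definition pos_def_sym_bilinear : Prop :=
  (forall (c : R) (u v w : V), form (c *: u + v) w = c * form u w + form v w) /\
  (forall u v : V, form u v = form v u) /\
  (forall v : V, v != 0 -> 0 < form v v).

Definition comm_bilinear_product : Prop :=
  (forall (c : R) (u v w : V), mul (c *: u + v) w = c *: mul u w + mul v w) /\
  (forall u v : V, mul u v = mul v u).

Definition M1 : Prop := forall u v w : V, form u (mul v w) = form (mul u v) w.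
Definition M2 : Prop :=
  forall u v : V, form (mul u v) (mul u v) <= form (mul u u) (mul v v).

Definition eigv (a : V) (mu : R) (v : V) : Prop := mul a v = mu *: v.

Definition in_V10 (a v : V) : Prop :=
  exists v1 v0, v = v1 + v0 /\ eigv a 1 v1 /\ eigv a 0 v0.

Definition in_Vplus (a v : V) : Prop :=
  exists v1 v0 v4, v = v1 + v0 + v4 /\ eigv a 1 v1 /\ eigv a 0 v0 /\
                   eigv a (1 / 4) v4.

Definition algebra_automorphism (t : V -> V) : Prop :=
  (forall (c : R) (u v : V), t (c *: u + v) = c *: t u + t v) /\
  bijective t /\
  (forall u v : V, t (mul u v) = mul (t u) (t v)).

Definition is_tau (a : V) (t : V -> V) : Prop :=
  (forall (c : R) (u v : V), t (c *: u + v) = c *: t u + t v) /\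
  (forall v, in_Vplus a v -> t v = v) /\
  (forall v, eigv a (1 / 32) v -> t v = - v).

Definition majorana_axis (a : V) (t : V -> V) : Prop :=
  form a a = 1 /\ mul a a = a /\
  (* M4 : V = V_1 + V_0 + V_{1/4} + V_{1/32} (the sum of eigenspaces for
     distinct eigenvalues is automatically direct) *)
  (forall v : V, exists v1 v0 v4 v32,
      v = v1 + v0 + v4 + v32 /\ eigv a 1 v1 /\ eigv a 0 v0 /\
      eigv a (1 / 4) v4 /\ eigv a (1 / 32) v32) /\
  (forall v : V, eigv a 1 v -> exists c : R, v = c *: a) /\
  is_tau a t /\ algebra_automorphism t /\
  (exists s : V -> V,
      (forall (c : R) (u v : V), s (c *: u + v) = c *: s u + s v) /\
      (forall v, in_V10 a v -> s v = v) /\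
      (forall v, eigv a (1 / 4) v -> s v = - v) /\
      (forall u v, in_Vplus a u -> in_Vplus a v -> s (mul u v) = mul (s u) (s v))).

Inductive generated (A : V -> Prop) : V -> Prop :=
  | gen_base v : A v -> generated A v
  | gen_lin (c : R) u v : generated A u -> generated A v ->
                          generated A (c *: u + v)
  | gen_mul u v : generated A u -> generated A v -> generated A (mul u v).

Inductive in_G (A : V -> Prop) (tau : V -> V -> V) : (V -> V) -> Prop :=
  | G_id : in_G A tau id
  | G_comp a g : A a -> in_G A tau g -> in_G A tau (fun v => g (tau a v)).

Definition majorana_algebra (A : V -> Prop) (tau : V -> V -> V) : Prop :=
  pos_def_sym_bilinear /\ comm_bilinear_product /\ M1 /\ M2 /\
  (forall a, A a -> majorana_axis a (tau a)) /\
  (forall v : V, generated A v) /\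
  (forall a b, A a -> A b -> A (tau b a)).

End Majorana.

From mathcomp Require Import all_boot all_order all_algebra.
From mathcomp Require Import reals.
Set Implicit Arguments. Unset Strict Implicit. Unset Printing Implicit Defensive.
Local Open Scope ring_scope.

(* Each element of G is a composite of the automorphisms tau(a), hence an
   algebra endomorphism of V; an endomorphism fixing the generating set A
   pointwise fixes the subalgebra generated by A, which is all of V. *)

Section AlgebraEndomorphisms.
Variables (R : realType) (V : lmodType R) (mul : V -> V -> V).

Definition algebra_endomorphism (f : V -> V) : Prop :=
  (forall (c : R) (u v : V), f (c *: u + v) = c *: f u + f v) /\
  (forall u v : V, f (mul u v) = mul (f u) (f v)).

Lemma algebra_automorphism_endo (f : V -> V) :
  algebra_automorphism mul f -> algebra_endomorphism f.
Proof. by case=> f_lin [_ f_mul]. Qed.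

Lemma algebra_endomorphism_id : algebra_endomorphism id.
Proof. by []. Qed.

Lemma algebra_endomorphism_comp (f g : V -> V) :
  algebra_endomorphism f -> algebra_endomorphism g ->
  algebra_endomorphism (fun v => g (f v)).
Proof.
move=> [f_lin f_mul] [g_lin g_mul].
by split=> [c u v | u v]; rewrite ?f_lin ?g_lin ?f_mul ?g_mul.
Qed.

Lemma in_G_endomorphism (A : V -> Prop) (tau : V -> V -> V) (g : V -> V) :
  (forall a, A a -> algebra_endomorphism (tau a)) ->
  in_G A tau g -> algebra_endomorphism g.
Proof.
move=> tau_endo; elim=> [|a h Aa _ h_endo].
  exact: algebra_endomorphism_id.
exact: algebra_endomorphism_comp (tau_endo a Aa) h_endo.
Qed.

Lemma algebra_endomorphism_fix_generated (A : V -> Prop) (g : V -> V) (v : V) :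
  algebra_endomorphism g -> (forall a, A a -> g a = a) ->
  generated mul A v -> g v = v.
Proof.
move=> [g_lin g_mul] g_fixA.
by elim=> [w /g_fixA | c u w _ IHu _ IHw | u w _ IHu _ IHw];
  rewrite ?g_lin ?g_mul ?IHu ?IHw.
Qed.

End AlgebraEndomorphisms.

Theorem mainTheorem5 (R : realType) (V : lmodType R)
  (form : V -> V -> R) (mul : V -> V -> V)
  (A : V -> Prop) (tau : V -> V -> V) :
  majorana_algebra form mul A tau ->
  forall g : V -> V, in_G A tau g ->
  (forall a, A a -> g a = a) -> forall v : V, g v = v.
Proof.
move=> [_ [_ [_ [_ [axes [gen _]]]]]] g Gg g_fixA v.
have tau_endo a : A a -> algebra_endomorphism mul (tau a).
  by move=> /axes [_ [_ [_ [_ [_ [/algebra_automorphism_endo ? _]]]]]].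
exact: algebra_endomorphism_fix_generated
  (in_G_endomorphism tau_endo Gg) g_fixA (gen v).
Qed.
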